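(* Let $y\in\mathbb{R}^N$, $\lambda>0$ and $\alpha\geq 0$. Let $$F(x)=\|x\|_1-\alpha\|x\|_2+\frac{1}{2\lambda}\|x-y\|_2^2,$$ and let $x^*$ be any minimizer of $F$ over $\mathbb{R}^N$. Then for every $x\in\mathbb{R}^N$, $$F(x^* )-F(x)\leq \min\left(\frac{\alpha}{2\|x^*\|_2}-\frac{1}{2\lambda},\,0\right)\|x^*-x\|_2^2,$$ where, when $x^*=0$, the quantity $\alpha/0$ is interpreted as $0$ if $\alpha=0$ and as $+\infty$ if $\alpha>0$. *)

From mathcomp Require Import all_boot all_order all_algebra.
From mathcomp Require Import reals.
Set Implicit Arguments. Unset Strict Implicit. Unset Printing Implicit Defensive.
Import Order.TTheory GRing.Theory Num.Theory.
Local Open Scope ring_scope.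

Definition norm1 (R : realType) (N : nat) (x : 'rV[R]_N) : R :=
  \sum_(i < N) `|x 0 i|.

Definition norm2 (R : realType) (N : nat) (x : 'rV[R]_N) : R :=
  Num.sqrt (\sum_(i < N) (x 0 i) ^+ 2).

Definition Fobj (R : realType) (N : nat) (alpha lambda : R) (y x : 'rV[R]_N) : R :=
  norm1 x - alpha * norm2 x + (2 * lambda)^-1 * (norm2 (x - y)) ^+ 2.

Definition is_minimizer (R : realType) (N : nat) (F : 'rV[R]_N -> R) (xs : 'rV[R]_N) : Prop :=
  forall x : 'rV[R]_N, F xs <= F x.

(* The coefficient min(alpha/(2||x*||_2) - 1/(2 lambda), 0), with the
   convention alpha/0 = 0 if alpha = 0 and alpha/0 = +oo if alpha > 0
   (in which case min(+oo, 0) = 0). *)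
Definition coef (R : realType) (N : nat) (alpha lambda : R) (xs : 'rV[R]_N) : R :=
  if norm2 xs == 0 then
    (if alpha == 0 then Num.min (- (2 * lambda)^-1) 0 else 0)
  else Num.min (alpha / (2 * norm2 xs) - (2 * lambda)^-1) 0.

From mathcomp Require Import all_boot all_order all_algebra.
From mathcomp Require Import reals ring lra.
Import Order.TTheory GRing.Theory Num.Theory.
Set Implicit Arguments. Unset Strict Implicit. Unset Printing Implicit Defensive.
Local Open Scope ring_scope.

(* Put m = alpha / (2 ||xs||_2), i.e. alpha = 2 m ||xs||_2; when xs = 0 this
   only makes sense for alpha = 0 (take m = 0), and for alpha > 0 the bound is
   just minimality.  Replacing -alpha ||x||_2 in F by its linearisation
   -2 m <xs, x> gives a function Flin >= F (Cauchy-Schwarz), equal to F at xs,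
   whose quadratic part makes it 1/lambda-strongly convex.  Comparing F xs
   with F on the segment from xs to x, dividing by the step t and letting
   t -> 0 yields F xs + ||xs - x||^2 / (2 lambda) <= Flin x, while
   Flin x - F x <= m ||xs - x||^2, the gap being m (||xs|| - ||x||)^2. *)

Lemma ler_of_forall_ler_addM (R : realFieldType) (x y z : R) :
  (forall t, 0 < t <= 1 -> x <= y + t * z) -> x <= y.
Proof.
move=> le_xy; apply/ler_addgt0Pr => e e_gt0.
have ez_gt0 : 0 < e + `|z| by rewrite ltr_wpDr.
pose t := e / (e + `|z|).
have t_gt0 : 0 < t by rewrite divr_gt0.
have t_le1 : t <= 1 by rewrite ler_pdivrMr // mul1r lerDl.
apply: le_trans (le_xy t _) _; first by rewrite t_gt0 t_le1.
rewrite lerD2l (le_trans (ler_norm _)) // normrM gtr0_norm //.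
by rewrite /t mulrAC ler_pdivrMr // ler_wpM2l ?ltW // ltrDr.
Qed.

Section Euclidean.
Variables (R : realType) (N : nat).
Implicit Types (a b c : 'rV[R]_N) (t u v : R).

Definition dotv a b : R := \sum_(i < N) a 0 i * b 0 i.

Lemma dotvC a b : dotv a b = dotv b a.
Proof. by apply: eq_bigr => i _; rewrite mulrC. Qed.

Lemma dotvv_ge0 a : 0 <= dotv a a.
Proof. by apply: sumr_ge0 => i _; rewrite -expr2 sqr_ge0. Qed.

Lemma norm2_sqr a : norm2 a ^+ 2 = dotv a a.
Proof.
rewrite /norm2 sqr_sqrtr; last by apply: sumr_ge0 => i _; rewrite sqr_ge0.
by apply: eq_bigr => i _; rewrite expr2.
Qed.

Lemma norm2_ge0 a : 0 <= norm2 a.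
Proof. exact: sqrtr_ge0. Qed.

Lemma dotvv_scaleB u v a b :
  dotv (u *: a - v *: b) (u *: a - v *: b) =
  u ^+ 2 * dotv a a - 2 * u * v * dotv a b + v ^+ 2 * dotv b b.
Proof.
rewrite /dotv !mulr_sumr -sumrB -big_split /=; apply: eq_bigr => i _.
by rewrite !mxE; ring.
Qed.

Lemma dotv_eq0_of_dotvv_eq0 a : dotv a a = 0 -> forall b, dotv a b = 0.
Proof.
move=> /eqP; rewrite psumr_eq0 => [/allP a0 b|i _]; last by rewrite -expr2 sqr_ge0.
apply: big1 => i _; have /= := a0 i (mem_index_enum i).
by rewrite mulf_eq0 orbb => /eqP ->; rewrite mul0r.
Qed.

Lemma dotv_sqr_le a b : dotv a b ^+ 2 <= dotv a a * dotv b b.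
Proof.
have [bb0|bb_neq0] := eqVneq (dotv b b) 0.
  by rewrite dotvC (dotv_eq0_of_dotvv_eq0 bb0) bb0 expr0n mulr0.
have bb_gt0 : 0 < dotv b b by rewrite lt_def bb_neq0 dotvv_ge0.
rewrite -subr_ge0 -(pmulr_rge0 _ bb_gt0).
have := dotvv_ge0 (dotv b b *: a - dotv a b *: b).
by rewrite dotvv_scaleB; congr (0 <= _); ring.
Qed.

Lemma dotv_le_norm2 a b : dotv a b <= norm2 a * norm2 b.
Proof.
rewrite (le_trans (ler_norm _)) // -sqrtr_sqr -sqrtrM ?dotvv_ge0 //.
by rewrite ler_wsqrtr // dotv_sqr_le.
Qed.

Lemma norm2_subr_sqr a b :
  norm2 (a - b) ^+ 2 = norm2 a ^+ 2 + norm2 b ^+ 2 - 2 * dotv a b.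
Proof.
rewrite !norm2_sqr /dotv mulr_sumr -!big_split -sumrB /=; apply: eq_bigr => i _.
by rewrite !mxE; ring.
Qed.

Lemma dotv_combr a b c t :
  dotv c ((1 - t) *: a + t *: b) = (1 - t) * dotv c a + t * dotv c b.
Proof.
rewrite /dotv !mulr_sumr -big_split /=; apply: eq_bigr => i _.
by rewrite !mxE; ring.
Qed.

Lemma norm2_combB_sqr a b c t :
  norm2 ((1 - t) *: a + t *: b - c) ^+ 2 = (1 - t) * norm2 (a - c) ^+ 2
    + t * norm2 (b - c) ^+ 2 - t * (1 - t) * norm2 (a - b) ^+ 2.
Proof.
rewrite !norm2_sqr /dotv !mulr_sumr -big_split -sumrB /=; apply: eq_bigr => i _.
by rewrite !mxE; ring.
Qed.

Lemma norm1_comb_le a b t : 0 <= t <= 1 ->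
  norm1 ((1 - t) *: a + t *: b) <= (1 - t) * norm1 a + t * norm1 b.
Proof.
move=> /andP[t_ge0 t_le1].
rewrite /norm1 !mulr_sumr -big_split /=; apply: ler_sum => i _.
rewrite !mxE (le_trans (ler_normD _ _)) //.
by rewrite !normrM (ger0_norm t_ge0) ger0_norm ?subr_ge0.
Qed.
End Euclidean.

Section Linearization.
Variables (R : realType) (N : nat) (alpha lambda m : R) (y xs : 'rV[R]_N).
Hypotheses (m_ge0 : 0 <= m) (alphaE : alpha = 2 * m * norm2 xs).
Local Notation F := (Fobj alpha lambda y).
Local Notation c := (2 * lambda)^-1.

Definition Flin (x : 'rV[R]_N) : R :=
  norm1 x - 2 * m * dotv xs x + c * norm2 (x - y) ^+ 2.

Lemma Fobj_le_Flin x : F x <= Flin x.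
Proof.
rewrite /Fobj /Flin lerD2r lerD2l lerN2 alphaE -[_ * norm2 xs * _]mulrA.
by rewrite ler_wpM2l ?mulr_ge0 // dotv_le_norm2.
Qed.

Lemma Flin_center : Flin xs = F xs.
Proof. by rewrite /Flin /Fobj alphaE -(norm2_sqr xs) (expr2 (norm2 xs)) mulrA. Qed.

Lemma Flin_comb a b t : 0 <= t <= 1 ->
  Flin ((1 - t) *: a + t *: b) <=
  (1 - t) * Flin a + t * Flin b - c * (t * (1 - t)) * norm2 (a - b) ^+ 2.
Proof.
move=> t01; have := norm1_comb_le a b t01.
by rewrite /Flin dotv_combr norm2_combB_sqr; lra.
Qed.

Lemma Flin_subr_Fobj x : Flin x - F x <= m * norm2 (xs - x) ^+ 2.
Proof.
rewrite /Flin /Fobj (norm2_subr_sqr xs x) alphaE -subr_ge0.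
rewrite [leRHS](_ : _ = m * (norm2 xs - norm2 x) ^+ 2); last by ring.
by rewrite mulr_ge0 ?sqr_ge0.
Qed.

Hypothesis xs_min : is_minimizer F xs.

Lemma minimizer_le_Flin x : F xs <= Flin x - c * norm2 (xs - x) ^+ 2.
Proof.
apply: (@ler_of_forall_ler_addM _ _ _ (c * norm2 (xs - x) ^+ 2)).
move=> t /andP[t_gt0 t_le1].
have t01 : 0 <= t <= 1 by rewrite ltW.
have := le_trans (xs_min _) (le_trans (Fobj_le_Flin _) (Flin_comb xs x t01)).
rewrite Flin_center; nra.
Qed.

Lemma minimizer_gap_le x :
  F xs - F x <= (m - c) * norm2 (xs - x) ^+ 2.
Proof.
have := minimizer_le_Flin x; have := Flin_subr_Fobj x.
rewrite mulrBl; lra.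
Qed.

End Linearization.

Theorem lemma2 (R : realType) (N : nat) (y : 'rV[R]_N) (lambda alpha : R)
  (hlambda : 0 < lambda) (halpha : 0 <= alpha) (xs : 'rV[R]_N)
  (hmin : is_minimizer (Fobj alpha lambda y) xs) :
  forall x : 'rV[R]_N,
    Fobj alpha lambda y xs - Fobj alpha lambda y x
      <= coef alpha lambda xs * (norm2 (xs - x)) ^+ 2.
Proof.
move=> x.
have gap_le0 : Fobj alpha lambda y xs - Fobj alpha lambda y x <= 0.
  by rewrite subr_le0.
have gap_le_min m : 0 <= m -> alpha = 2 * m * norm2 xs ->
    Fobj alpha lambda y xs - Fobj alpha lambda y x
      <= Num.min (m - (2 * lambda)^-1) 0 * norm2 (xs - x) ^+ 2.
  move=> m_ge0 alphaE; rewrite minr_pMl ?sqr_ge0 // mul0r le_min gap_le0 andbT.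
  exact: minimizer_gap_le.
rewrite /coef; have [s0|s_neq0] := eqVneq (norm2 xs) 0.
  have [alpha0|_] := eqVneq alpha 0; last by rewrite mul0r.
  rewrite -[- (2 * lambda)^-1]add0r.
  by apply: gap_le_min; rewrite // alpha0 s0 mulr0.
apply: gap_le_min; first by rewrite divr_ge0 ?mulr_ge0 ?norm2_ge0.
by rewrite mulrAC mulrC divfK // mulf_neq0 ?pnatr_eq0.
Qed.
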